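(* Let $G=(V_G,E_G)$ be a graph with $N$ vertices, $g\ge0$, and $H$ the transverse-field Ising Hamiltonian on $G$. Then $$\min_{|\varphi\rangle\text{ stabilizer state}}\langle\varphi|H|\varphi\rangle=\min_{n\in\{0,1,\dots,N\}}\big(-\mathcal{E}(n)-g(N-n)\big).$$ Moreover, any vertex set $V$ minimizing $f(S)=-|E(S)|-g|V_G\setminus S|$ over $S\subseteq V_G$ is an $n$-optimal vertex set for $n=|V|$.
   Context: A graph $G=(V_G,E_G)$ is finite, simple and undirected, with $V_G=\{q_0,\dots,q_{N-1}\}$, vertex $q_i$ corresponding to qubit $i$. For $S\subseteq V_G$, $E(S)$ is the set of edges with both endpoints in $S$. The transverse-field Ising Hamiltonian on $G$ is $H=-\sum_{\langle q_i,q_j\rangle\in E_G}Z_iZ_j-g\sum_{q_i\in V_G}X_i$; stabilizer states are $N$-qubit states whose stabilizer group consists of $2^N$ Pauli-group elements. The edge-function is $\mathcal{E}(n)=\max\{|E(S)|: S\subseteq V_G,\ |S|\le n\}$ for $0\le n\le N$ (so $\mathcal{E}(0)=\mathcal{E}(1)=0$). A set $S\subseteq V_G$ with $|S|\le n$ and $|E(S)|=\mathcal{E}(n)$ is called an $n$-optimal vertex set. *)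

From HB Require Import structures.
From mathcomp Require Import all_boot all_order all_algebra.
From mathcomp Require Import complex.
Set Implicit Arguments. Unset Strict Implicit. Unset Printing Implicit Defensive.
Import Order.TTheory GRing.Theory Num.Theory.
Local Open Scope ring_scope.

Section Defs.
Variable R : rcfType.
Local Notation C := R[i].

(* Qubits are indexed by 'I_N; computational basis states of N qubits by
   'I_(2^N); bit j of basis index k is the state of qubit j. *)
Definition qbit (N : nat) (k : 'I_(2 ^ N)) (j : 'I_N) : bool := odd (k %/ 2 ^ j).

(* single-qubit Pauli matrices sigma_0 = I, sigma_1 = X, sigma_2 = Y,
   sigma_3 = Z, as functions of (row bit, column bit). *)
Definition sigma (a : 'I_4) (r c : bool) : C :=
  match val a with
  | 0 => if r == c then 1 else 0
  | 1 => if r == c then 0 else 1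
  | 2 => if r == c then 0 else (if r then 'i else - 'i)%C
  | _ => if r == c then (if r then -1 else 1) else 0
  end.

(* Pauli string sigma_{p 0} (x) ... (x) sigma_{p (N-1)} (tensor product,
   written entrywise). *)
Definition pauli_string N (p : {ffun 'I_N -> 'I_4}) : 'M[C]_(2 ^ N) :=
  \matrix_(r, c) \prod_(j < N) sigma (p j) (qbit r j) (qbit c j).

Definition pauli_elt N (q : 'I_4 * {ffun 'I_N -> 'I_4}) : 'M[C]_(2 ^ N) :=
  ('i%C ^+ q.1) *: pauli_string q.2.

Definition bra N (phi : 'cV[C]_(2 ^ N)) : 'rV[C]_(2 ^ N) :=
  (map_mx (fun z : C => (z ^*)%C) phi)^T.

Definition is_state N (phi : 'cV[C]_(2 ^ N)) : Prop :=
  (bra phi *m phi) 0 0 = 1.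

Definition stab_group N (phi : 'cV[C]_(2 ^ N)) : {set 'I_4 * {ffun 'I_N -> 'I_4}} :=
  [set q | pauli_elt q *m phi == phi].

Definition stabilizer_state N (phi : 'cV[C]_(2 ^ N)) : Prop :=
  is_state phi /\ #|stab_group phi| = (2 ^ N)%N.

Definition expval N (H : 'M[C]_(2 ^ N)) (phi : 'cV[C]_(2 ^ N)) : C :=
  (bra phi *m H *m phi) 0 0.

Definition ZZ N (i j : 'I_N) : {ffun 'I_N -> 'I_4} :=
  [ffun k => if (k == i) || (k == j) then inord 3 else inord 0].
Definition Xat N (i : 'I_N) : {ffun 'I_N -> 'I_4} :=
  [ffun k => if k == i then inord 1 else inord 0].

(* The transverse-field Ising Hamiltonian on the graph with adjacency
   relation adj on vertex set 'I_N; each edge {i,j} is counted once (i < j). *)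
Definition tfim N (adj : rel 'I_N) (g : R) : 'M[C]_(2 ^ N) :=
  - (\sum_(i < N) \sum_(j < N | (i < j)%N && adj i j) pauli_string (ZZ i j))
  - (g%:C)%C *: (\sum_(i < N) pauli_string (Xat i)).

End Defs.

Definition simple_graph N (adj : rel 'I_N) : Prop :=
  symmetric adj /\ irreflexive adj.

Definition edges_in N (adj : rel 'I_N) (S : {set 'I_N}) : {set 'I_N * 'I_N} :=
  [set e : 'I_N * 'I_N | [&& (e.1 < e.2)%N, adj e.1 e.2, e.1 \in S & e.2 \in S]].

Definition edge_fun N (adj : rel 'I_N) (n : nat) : nat :=
  \max_(S : {set 'I_N} | (#|S| <= n)%N) #|edges_in adj S|.

Definition n_optimal N (adj : rel 'I_N) (n : nat) (S : {set 'I_N}) : Prop :=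
  (#|S| <= n)%N /\ #|edges_in adj S| = edge_fun adj n.

Definition fcost (R : rcfType) N (adj : rel 'I_N) (g : R) (S : {set 'I_N}) : R :=
  - (#|edges_in adj S|)%:R - g * (#|~: S|)%:R.

Definition rhs_min (R : rcfType) N (adj : rel 'I_N) (g : R) : R :=
  \big[Order.min/(- (edge_fun adj 0)%:R - g * N%:R)]_(n < N.+1)
     (- (edge_fun adj n)%:R - g * (N - n)%:R).

(* For any state, the squared expectations of the 4^N Pauli strings sum to 2^N, because
   the Pauli strings are orthogonal for the Hilbert-Schmidt product.  For a stabilizer
   state the 2^N stabilizing strings already contribute 1 each, so every other string has
   expectation 0, and a stabilizing string has expectation +-1 with the state as an
   eigenvector; hence two anticommuting strings never both have nonzero expectation.
   Since X_i and X_j anticommute with Z_i Z_j, the set S of vertices with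
   <X_i> = 0 satisfies <H> >= f(S).  Conversely the product state |0> on S, |+> off S
   is a stabilizer state with <H> = f(S).  Finally, as g >= 0, minimizing f over sets of
   size at most n is achieved by n-optimal sets, which turns min_S f(S) into
   min_n (-E(n) - g (N - n)). *)

From HB Require Import structures.
From mathcomp Require Import all_boot all_order all_algebra.
From mathcomp Require Import complex ring.
Set Implicit Arguments. Unset Strict Implicit. Unset Printing Implicit Defensive.
Import Order.TTheory GRing.Theory Num.Theory.
Local Open Scope ring_scope.

Lemma binary_expansion (N k : nat) : (k < 2 ^ N)%N ->
  k = (\sum_(j < N) odd (k %/ 2 ^ j) * 2 ^ j)%N.
Proof.
elim: N k => [|N IH] k hk.
  by rewrite big_ord0; move: hk; rewrite expn0; case: k.
rewrite big_ord_recl /= expn0 divn1 muln1.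
have hk2 : (k %/ 2 < 2 ^ N)%N by rewrite ltn_divLR // -expnSr.
rewrite -[X in X = _]odd_double_half; congr addn.
rewrite -divn2 {1}(IH _ hk2) -muln2 big_distrl /=; apply: eq_bigr => j _.
by rewrite /bump /= add1n expnS divnMA [(2 * _)%N]mulnC mulnA.
Qed.

Definition qbits N (k : 'I_(2 ^ N)) : {ffun 'I_N -> bool} := [ffun j => qbit k j].

Lemma qbits_inj N : injective (@qbits N).
Proof.
move=> r c /ffunP eq_rc; apply: val_inj => /=.
rewrite (binary_expansion (ltn_ord r)) (binary_expansion (ltn_ord c)).
by apply: eq_bigr => j _; have := eq_rc j; rewrite !ffunE /qbit => ->.
Qed.

Lemma qbits_bij N : bijective (@qbits N).
Proof.
apply: inj_card_bij; first exact: qbits_inj.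
by rewrite card_ffun card_bool !card_ord.
Qed.

Lemma sum_prod_qbit (R : comNzRingType) N (F : 'I_N -> bool -> R) :
  \sum_(k < 2 ^ N) \prod_(j < N) F j (qbit k j) = \prod_(j < N) \sum_(b : bool) F j b.
Proof.
rewrite bigA_distr_bigA /= (reindex (@qbits N)) /=; last exact/onW_bij/qbits_bij.
by apply: eq_bigr => k _; apply: eq_bigr => j _; rewrite ffunE.
Qed.

Lemma eq_qbitsE N (r c : 'I_(2 ^ N)) : (r == c) = [forall j, qbit r j == qbit c j].
Proof.
apply/eqP/forallP => [-> // | same].
by apply/qbits_inj/ffunP => j; rewrite !ffunE; apply/eqP.
Qed.

Lemma prod_if_const (R : comPzSemiRingType) (I : finType) (P : pred I) (x : R) :
  \prod_(i : I) (if P i then x else 0) = if [forall i, P i] then x ^+ #|I| else 0.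
Proof.
case: (boolP [forall i, P i]) => [/forallP allP | /forallPn [i nPi]].
  by rewrite -prodr_const; apply: eq_bigr => i _; rewrite allP.
by rewrite (bigD1 i) //= (negbTE nPi) mul0r.
Qed.

Section PauliStrings.
Variable R : rcfType.
Local Notation C := R[i].
Local Notation sig := (sigma R).
Local Notation PS := (pauli_string R).

Lemma sum_sigma_mulJ (r c r' c' : bool) :
  \sum_(a : 'I_4) sig a r c * (sig a r' c')^*%C = if (r == r') && (c == c') then 2 else 0.
Proof.
rewrite !big_ord_recl big_ord0 /sigma /=.
by case: r; case: c; case: r'; case: c'; rewrite /= ?conjc0 ?conjc1 ?rmorphN ?conjc1 /=;
  apply/eqP; rewrite eq_complex /=; simpc.
Qed.

Lemma sum_pauli_string_mulJ N (a b c d : 'I_(2 ^ N)) :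
  \sum_(p : {ffun 'I_N -> 'I_4}) PS p a b * (PS p c d)^*%C
  = if (a == c) && (b == d) then (2 ^ N)%:R else 0.
Proof.
transitivity (\prod_(j < N) \sum_(x : 'I_4)
    sig x (qbit a j) (qbit b j) * (sig x (qbit c j) (qbit d j))^*%C).
  rewrite bigA_distr_bigA; apply: eq_bigr => p _.
  by rewrite !mxE rmorph_prod -big_split.
under eq_bigr do rewrite sum_sigma_mulJ.
rewrite prod_if_const card_ord natrX !eq_qbitsE.
congr (if _ then _ else _); apply/forallP/andP => [same | [/forallP ac /forallP bd] j].
  by split; apply/forallP => j; have /andP[] := same j.
by rewrite ac bd.
Qed.

Definition sigma_mul (a b : 'I_4) (r c : bool) : C := \sum_(x : bool) sig a r x * sig b x c.

Lemma pauli_string_mul N (p q : {ffun 'I_N -> 'I_4}) :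
  PS p *m PS q = \matrix_(r, c) \prod_(j < N) sigma_mul (p j) (q j) (qbit r j) (qbit c j).
Proof.
apply/matrixP => r c; rewrite !mxE.
under eq_bigr do rewrite !mxE -big_split /=.
exact: (sum_prod_qbit (fun j x => sig (p j) (qbit r j) x * sig (q j) x (qbit c j))).
Qed.

Lemma sigma_mul_sqr (a : 'I_4) r c : sigma_mul a a r c = if r == c then 1 else 0.
Proof.
rewrite /sigma_mul big_bool /sigma.
by case: a => -[|[|[|k]]] ?; case: r; case: c => /=; apply/eqP; rewrite eq_complex /=; simpc.
Qed.

Lemma pauli_string_sqr N (p : {ffun 'I_N -> 'I_4}) : PS p *m PS p = 1%:M.
Proof.
rewrite pauli_string_mul; apply/matrixP => r c; rewrite !mxE.
under eq_bigr do rewrite sigma_mul_sqr.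
by rewrite prod_if_const -eq_qbitsE expr1n; case: (r == c).
Qed.

Lemma sigma_mul_idC (a : 'I_4) r c : sigma_mul (inord 0) a r c = sigma_mul a (inord 0) r c.
Proof.
rewrite /sigma_mul !big_bool /sigma /= inordK //.
by case: a => -[|[|[|k]]] ?; case: r; case: c => /=; apply/eqP; rewrite eq_complex /=; simpc.
Qed.

Lemma sigma_mul_XZ r c : sigma_mul (inord 1) (inord 3) r c = - sigma_mul (inord 3) (inord 1) r c.
Proof.
rewrite /sigma_mul !big_bool /sigma /= !inordK //.
by case: r; case: c => /=; apply/eqP; rewrite eq_complex /=; simpc.
Qed.

Lemma pauli_string_anticomm N (p q : {ffun 'I_N -> 'I_4}) (k : 'I_N) :
  p k = inord 1 -> q k = inord 3 -> (forall l, l != k -> p l = inord 0) ->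
  PS p *m PS q = - (PS q *m PS p).
Proof.
move=> pk qk p_id; rewrite !pauli_string_mul; apply/matrixP => r c; rewrite !mxE.
rewrite (bigD1 k) //= [in RHS](bigD1 k) //= pk qk sigma_mul_XZ mulNr.
by congr (- (_ * _)); apply: eq_bigr => l nlk; rewrite p_id // sigma_mul_idC.
Qed.
End PauliStrings.

Section Expval.
Variables (R : rcfType) (N : nat).
Local Notation C := R[i].
Local Notation PS := (pauli_string R).
Implicit Types (A B : 'M[C]_(2 ^ N)) (phi : 'cV[C]_(2 ^ N)).

Lemma expvalE A phi :
  expval A phi = \sum_a \sum_b (phi a 0)^*%C * A a b * phi b 0.
Proof.
rewrite /expval /bra mxE.
under eq_bigr do rewrite mxE big_distrl.
by rewrite exchange_big; apply: eq_bigr => a _; apply: eq_bigr => b _; rewrite !mxE.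
Qed.

Lemma expvalD A B phi : expval (A + B) phi = expval A phi + expval B phi.
Proof. by rewrite /expval mulmxDr mulmxDl mxE. Qed.

Lemma expvalN A phi : expval (- A) phi = - expval A phi.
Proof. by rewrite /expval mulmxN mulNmx mxE. Qed.

Lemma expvalZ A k phi : expval (k *: A) phi = k * expval A phi.
Proof. by rewrite /expval -scalemxAr -scalemxAl mxE. Qed.

Lemma expval_sum (I : finType) (P : pred I) (F : I -> 'M[C]_(2 ^ N)) phi :
  expval (\sum_(i | P i) F i) phi = \sum_(i | P i) expval (F i) phi.
Proof. by rewrite /expval mulmx_sumr mulmx_suml summxE. Qed.

Lemma expval_eigen A phi k :
  is_state phi -> A *m phi = k *: phi -> expval A phi = k.
Proof. by rewrite /expval -mulmxA => state_phi ->; rewrite -scalemxAr mxE state_phi mulr1. Qed.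

Lemma expval1 phi : is_state phi -> expval 1%:M phi = 1.
Proof. by move=> state_phi; apply: expval_eigen; rewrite ?mul1mx ?scale1r. Qed.

Lemma expval_mul_eigen A B phi k :
  A *m phi = k *: phi -> expval (B *m A) phi = k * expval B phi.
Proof. by rewrite /expval mulmxA -mulmxA => ->; rewrite -scalemxAr mxE. Qed.

Lemma state_sum_normr phi : is_state phi -> \sum_a `|phi a 0| ^+ 2 = 1.
Proof.
rewrite /is_state /bra mxE => <-.
by apply: eq_bigr => a _; rewrite sqr_normc !mxE mulrC.
Qed.

Lemma sum_expval_pauli_sqr phi : is_state phi ->
  \sum_(p : {ffun 'I_N -> 'I_4}) `|expval (PS p) phi| ^+ 2 = (2 ^ N)%:R.
Proof.
move=> state_phi; pose w (u : 'I_(2 ^ N) * 'I_(2 ^ N)) := (phi u.1 0)^*%C * phi u.2 0.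
have expvalW p : expval (PS p) phi = \sum_u w u * PS p u.1 u.2.
  by rewrite expvalE pair_bigA; apply: eq_bigr => -[a b] _; rewrite mulrAC.
transitivity (\sum_u \sum_v w u * (w v)^*%C
    * \sum_(p : {ffun 'I_N -> 'I_4}) PS p u.1 u.2 * (PS p v.1 v.2)^*%C).
  under eq_bigr do rewrite sqr_normc expvalW (rmorph_sum (@conjc R)) big_distrlr.
  rewrite exchange_big; apply: eq_bigr => u _; rewrite exchange_big; apply: eq_bigr => v _.
  by rewrite big_distrr; apply: eq_bigr => p _; rewrite rmorphM /= mulrACA.
transitivity (\sum_u `|w u| ^+ 2 * (2 ^ N)%:R).
  apply: eq_bigr => u _; rewrite (bigD1 u) //= sum_pauli_string_mulJ !eqxx sqr_normc.
  rewrite big1 ?addr0 // => v /negbTE neq_vu.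
  by rewrite sum_pauli_string_mulJ -xpair_eqE -!surjective_pairing eq_sym neq_vu mulr0.
have normw u : `|w u| = `|phi u.1 0| * `|phi u.2 0| by rewrite normrM normcJ.
under eq_bigr do rewrite normw exprMn.
rewrite -mulr_suml -(pair_bigA _ (fun a b => `|phi a 0| ^+ 2 * `|phi b 0| ^+ 2)) /=.
by rewrite -big_distrlr /= (state_sum_normr state_phi) !mul1r.
Qed.
End Expval.

Section Stabilizer.
Variables (R : rcfType) (N : nat) (phi : 'cV[R[i]]_(2 ^ N)).
Local Notation C := R[i].
Local Notation PS := (pauli_string R).
Hypothesis state_phi : is_state phi.

Lemma i_prim_root4 : 4.-primitive_root ('i : C).
Proof.
apply/andP; split => //; apply/forallP => -[[|[|[|[|k]]]] //= _]; rewrite unity_rootE.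
all: rewrite ?exprS ?expr0 eq_complex /=; simpc; rewrite ?eqxx ?oner_eq0 ?andbF //=.
all: by rewrite ?oppr_eq0 ?oner_eq0 ?andbF // (lt_eqF (lt_trans (ltrN10 R) ltr01)).
Qed.

Lemma expr_i_inj (m m' : 'I_4) : ('i : C) ^+ m = 'i ^+ m' -> m = m'.
Proof.
move/eqP; rewrite (eq_prim_root_expr i_prim_root4) !modn_small //.
by move/eqP; apply: val_inj.
Qed.

Definition stab_strings : {set {ffun 'I_N -> 'I_4}} := [set q.2 | q in stab_group phi].

Lemma stab_group_eigen m p :
  (m, p) \in stab_group phi -> PS p *m phi = (('i : C) ^+ m)^-1 *: phi.
Proof.
rewrite inE /pauli_elt /= => /eqP fix_phi.
by rewrite -{2}fix_phi -scalemxAl scalerA mulVf ?scale1r // expf_neq0 // neq0Ci.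
Qed.

Lemma expval_stab m p : (m, p) \in stab_group phi -> expval (PS p) phi = (('i : C) ^+ m)^-1.
Proof. by move/stab_group_eigen; apply: expval_eigen. Qed.

Lemma card_stab_strings : #|stab_strings| = #|stab_group phi|.
Proof.
apply: card_in_imset => -[m p] [m' p'] stab stab' /= eq_pp'; subst p'.
by have := expval_stab stab; rewrite (expval_stab stab') => /invr_inj/expr_i_inj ->.
Qed.

Lemma normr_expval_stab p : p \in stab_strings -> `|expval (PS p) phi| = 1.
Proof.
by case/imsetP => -[m p'] /expval_stab ev ->; rewrite ev normfV normrX normCi expr1n invr1.
Qed.

Lemma parseval_stab :
  #|stab_group phi|%:R + \sum_(p | p \notin stab_strings) `|expval (PS p) phi| ^+ 2
  = (2 ^ N)%:R :> C.
Proof.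
rewrite -(sum_expval_pauli_sqr state_phi) [RHS](bigID (mem stab_strings)) /=.
congr (_ + _); rewrite -card_stab_strings -sumr_const.
by apply: eq_bigr => p /normr_expval_stab ->; rewrite expr1n.
Qed.

Lemma card_stab_group_le : (#|stab_group phi| <= 2 ^ N)%N.
Proof.
rewrite -(ler_nat C) -parseval_stab lerDl.
by apply: sumr_ge0 => p _; rewrite exprn_ge0.
Qed.

Section FullStabilizer.
Hypothesis card_stab : #|stab_group phi| = (2 ^ N)%N.

Lemma expval_pauli_notin_stab p : p \notin stab_strings -> expval (PS p) phi = 0.
Proof.
move=> p_nstab; apply/eqP; rewrite -normr_eq0 -sqrf_eq0; apply/eqP.
have rest0 : \sum_(q | q \notin stab_strings) `|expval (PS q) phi| ^+ 2 = 0.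
  by apply: (@addrI _ #|stab_group phi|%:R); rewrite parseval_stab card_stab addr0.
by apply: (psumr_eq0P _ rest0) => // q _; rewrite exprn_ge0.
Qed.

Lemma expval_pauli_cases p :
  expval (PS p) phi = 0 \/
  expval (PS p) phi ^+ 2 = 1 /\ PS p *m phi = expval (PS p) phi *: phi.
Proof.
case: (boolP (p \in stab_strings)) => [/imsetP [[m p'] stab ->] | p_nstab]; last first.
  by left; apply: expval_pauli_notin_stab.
right; have eig := stab_group_eigen stab; rewrite (expval_eigen state_phi eig); split => //.
have := expval_mul_eigen (PS p') eig; rewrite pauli_string_sqr (expval_eigen state_phi eig).
by rewrite (expval1 state_phi) -expr2 => <-.
Qed.

Lemma expval_pauli_le_neq0 p : expval (PS p) phi <= (expval (PS p) phi != 0)%:R.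
Proof.
case: (expval_pauli_cases p) => [-> | [/eqP]]; first by rewrite eqxx.
rewrite sqrf_eq1 => /orP[]/eqP-> _; rewrite ?oppr_eq0 oner_eq0 //=.
exact: le_trans (lerN10 _) ler01.
Qed.

Lemma expval_anticomm_eq0 p q : PS p *m PS q = - (PS q *m PS p) ->
  expval (PS p) phi = 0 \/ expval (PS q) phi = 0.
Proof.
move=> anti; case: (expval_pauli_cases p) => [|[a2 eig_p]]; first by left.
case: (expval_pauli_cases q) => [|[b2 eig_q]]; first by right.
have := expval_mul_eigen (PS p) eig_q; rewrite anti expvalN (expval_mul_eigen _ eig_p).
move/eqP; rewrite mulrC eqNr mulf_eq0 => /orP[]/eqP ev0; [move: b2 | move: a2];
  by rewrite ev0 expr0n => /esym/eqP; rewrite oner_eq0.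
Qed.
End FullStabilizer.
End Stabilizer.

Lemma card_edges_in N (adj : rel 'I_N) (S : {set 'I_N}) :
  #|edges_in adj S| =
  (\sum_(i < N) \sum_(j < N | (i < j)%N && adj i j) ((i \in S) && (j \in S)))%N.
Proof.
transitivity (\sum_i \sum_j (if (i, j) \in edges_in adj S then 1 else 0))%N.
  by rewrite -sum1_card big_mkcond pair_bigA; apply: eq_bigr => -[i j].
apply: eq_bigr => i _; rewrite [in RHS]big_mkcond; apply: eq_bigr => j _.
by rewrite inE /=; case: (i < j)%N; case: (adj i j); case: (i \in S); case: (j \in S).
Qed.

Section IsingExpectation.
Variables (R : rcfType) (N : nat) (adj : rel 'I_N) (g : R).
Local Notation C := R[i].
Local Notation PS := (pauli_string R).

Lemma expval_tfim (phi : 'cV[C]_(2 ^ N)) :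
  expval (tfim adj g) phi =
  - (\sum_(i < N) \sum_(j < N | (i < j)%N && adj i j) expval (PS (ZZ i j)) phi)
  - (g%:C)%C * \sum_(i < N) expval (PS (Xat i)) phi.
Proof.
rewrite /tfim expvalD !expvalN expvalZ !expval_sum; congr (- _ - _).
by apply: eq_bigr => i _; rewrite expval_sum.
Qed.

Lemma Xat_ZZ_anticomm (i j k : 'I_N) : (k == i) || (k == j) ->
  PS (Xat k) *m PS (ZZ i j) = - (PS (ZZ i j) *m PS (Xat k)).
Proof.
move=> k_ij; apply: (@pauli_string_anticomm _ _ _ _ k); rewrite ?ffunE ?eqxx ?k_ij //.
by move=> l /negbTE nlk; rewrite ffunE nlk.
Qed.

Lemma fcost_le_expval_tfim (phi : 'cV[C]_(2 ^ N)) : 0 <= g -> stabilizer_state phi ->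
  exists S, ((fcost adj g S)%:C)%C <= expval (tfim adj g) phi.
Proof.
move=> g_ge0 [state_phi card_stab].
exists [set i | expval (PS (Xat i)) phi == 0].
rewrite expval_tfim /fcost rmorphB rmorphM !rmorphN !rmorph_nat.
apply: lerB; last first.
  apply: ler_wpM2l; first by rewrite ler0c.
  rewrite -sum1_card natr_sum [X in _ <= X]big_mkcond /=.
  apply: ler_sum => i _; rewrite !inE.
  by apply: le_trans (expval_pauli_le_neq0 state_phi card_stab _) _; case: eqP.
rewrite lerN2 card_edges_in natr_sum; apply: ler_sum => i _; rewrite natr_sum.
rewrite [X in _ <= X]big_mkcond [X in X <= _]big_mkcond /=; apply: ler_sum => j _.
case: ifP => // _; rewrite !inE.
apply: le_trans (expval_pauli_le_neq0 state_phi card_stab _) _.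
case: eqP => [_ | /eqP nz]; first by rewrite ler0n.
have Xat0 k : (k == i) || (k == j) -> expval (PS (Xat k)) phi == 0.
  move=> kij; have [->|] := expval_anticomm_eq0 state_phi card_stab (Xat_ZZ_anticomm kij) => //.
  by move/eqP; rewrite (negbTE nz).
by rewrite !Xat0 ?eqxx ?orbT.
Qed.
End IsingExpectation.

Section ProductStates.
Variable R : rcfType.
Local Notation C := R[i].
Local Notation sig := (sigma R).
Local Notation PS := (pauli_string R).

Definition invsqrt2 : C := ((Num.sqrt (2 : R))^-1)%:C%C.

Lemma invsqrt2_sqrD : invsqrt2 ^+ 2 + invsqrt2 ^+ 2 = 1.
Proof.
rewrite /invsqrt2 -!rmorphXn -rmorphD exprVn sqr_sqrtr ?ler0n //.
by congr (_%:C)%C; field.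
Qed.

(* Amplitudes of |0> (qubits in S) and of |+> (qubits outside S). *)
Definition amp (inS b : bool) : C := if inS then (~~ b)%:R else invsqrt2.

Definition pstate N (S : {set 'I_N}) : 'cV[C]_(2 ^ N) :=
  \matrix_(k, _) \prod_(j < N) amp (j \in S) (qbit k j).

Lemma conj_amp inS b : (amp inS b)^*%C = amp inS b.
Proof. by case: inS; rewrite /amp /invsqrt2 ?conjc_nat ?conjc_real. Qed.

Lemma pstate_state N (S : {set 'I_N}) : is_state (pstate S).
Proof.
rewrite /is_state /bra mxE.
transitivity (\sum_(r < 2 ^ N) \prod_(j < N) amp (j \in S) (qbit r j) ^+ 2).
  apply: eq_bigr => r _; rewrite !mxE rmorph_prod -big_split.
  by apply: eq_bigr => j _; rewrite expr2; congr (_ * _); apply: conj_amp.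
rewrite (sum_prod_qbit (fun j b => amp (j \in S) b ^+ 2)).
apply: big1 => j _; rewrite big_bool /amp; case: (j \in S).
  by rewrite /= expr0n expr1n add0r.
exact: invsqrt2_sqrD.
Qed.

Definition amp_expval (a : 'I_4) (inS : bool) : C :=
  \sum_(x : bool) \sum_(y : bool) amp inS x * sig a x y * amp inS y.

Lemma expval_pstate N (S : {set 'I_N}) p :
  expval (PS p) (pstate S) = \prod_(j < N) amp_expval (p j) (j \in S).
Proof.
pose F j x y := amp (j \in S) x * sig (p j) x y * amp (j \in S) y.
rewrite expvalE -(sum_prod_qbit (fun j x => \sum_(y : bool) F j x y)).
apply: eq_bigr => r _; rewrite -(sum_prod_qbit (fun j y => F j (qbit r j) y)).
apply: eq_bigr => c _; rewrite !mxE rmorph_prod -!big_split /=.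
by apply: eq_bigr => j _; congr (_ * _ * _); apply: conj_amp.
Qed.

Lemma amp_expval_id inS : amp_expval (inord 0) inS = 1.
Proof.
rewrite /amp_expval !big_bool /sigma /= inordK // /amp.
case: inS => /=; first by ring.
by transitivity (invsqrt2 ^+ 2 + invsqrt2 ^+ 2); [ring | exact: invsqrt2_sqrD].
Qed.

Lemma amp_expval_X inS : amp_expval (inord 1) inS = (~~ inS)%:R.
Proof.
rewrite /amp_expval !big_bool /sigma /= inordK // /amp.
case: inS => /=; first by ring.
by transitivity (invsqrt2 ^+ 2 + invsqrt2 ^+ 2); [ring | exact: invsqrt2_sqrD].
Qed.

Lemma amp_expval_Z inS : amp_expval (inord 3) inS = inS%:R.
Proof. by rewrite /amp_expval !big_bool /sigma /= inordK // /amp; case: inS => /=; ring. Qed.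

Lemma expval_pstate_Xat N (S : {set 'I_N}) i : expval (PS (Xat i)) (pstate S) = (i \notin S)%:R.
Proof.
rewrite expval_pstate (bigD1 i) //= big1 => [|k nki]; last by rewrite ffunE (negbTE nki) amp_expval_id.
by rewrite ffunE eqxx amp_expval_X mulr1.
Qed.

Lemma expval_pstate_ZZ N (S : {set 'I_N}) i j : i != j ->
  expval (PS (ZZ i j)) (pstate S) = ((i \in S) && (j \in S))%:R.
Proof.
move=> nij; rewrite expval_pstate (bigD1 i) //= (bigD1 j) /=; last by rewrite eq_sym.
rewrite big1 => [|k /andP [nki nkj]]; last by rewrite ffunE (negbTE nki) (negbTE nkj) amp_expval_id.
by rewrite !ffunE !eqxx orbT !amp_expval_Z mulr1 -natrM mulnb.
Qed.

(* Z fixes |0> and X fixes |+>, so each of these 2^N strings fixes [pstate S]. *)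
Definition pstate_stab_string N (S : {set 'I_N}) (b : {ffun 'I_N -> bool}) :
  {ffun 'I_N -> 'I_4} :=
  [ffun j => if b j then (if j \in S then inord 3 else inord 1) else inord 0].

Lemma pstate_stab_string_fix N (S : {set 'I_N}) b :
  PS (pstate_stab_string S b) *m pstate S = pstate S.
Proof.
apply/matrixP => r z; rewrite !mxE.
under eq_bigr do rewrite !mxE -big_split.
rewrite (sum_prod_qbit (fun j y => sig (pstate_stab_string S b j) (qbit r j) y * amp (j \in S) y)).
apply: eq_bigr => j _; rewrite big_bool ffunE /sigma /amp.
by case: (b j); case: (j \in S); rewrite /= inordK //; case: (qbit r j) => /=; ring.
Qed.

Lemma pstate_stabilizer N (S : {set 'I_N}) : stabilizer_state (pstate S).
Proof.
split; first exact: pstate_state.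
apply/eqP; rewrite eqn_leq (card_stab_group_le (pstate_state S)) /=.
have inj_string : injective (fun b => (ord0 : 'I_4, pstate_stab_string S b)).
  move=> b b' [/ffunP eq_bb']; apply/ffunP => j; have := eq_bb' j; rewrite !ffunE.
  by case: (b j); case: (b' j); case: (j \in S) => // /(congr1 val) /=; rewrite !inordK.
have -> : (2 ^ N)%N = #|[set: {ffun 'I_N -> bool}]| by rewrite cardsT card_ffun card_bool card_ord.
rewrite -(card_imset _ inj_string).
apply: subset_leq_card; apply/subsetP => q /imsetP [b _ ->].
by rewrite inE /pauli_elt /= expr0 scale1r pstate_stab_string_fix.
Qed.
End ProductStates.

Lemma card_setC_ord N (S : {set 'I_N}) : #|~: S| = (N - #|S|)%N.
Proof. by rewrite -[X in (X - _)%N](card_ord N) -(cardsC S) addKn. Qed.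

Lemma expval_tfim_pstate (R : rcfType) N (adj : rel 'I_N) (g : R) (S : {set 'I_N}) :
  expval (tfim adj g) (pstate R S) = ((fcost adj g S)%:C)%C.
Proof.
rewrite expval_tfim /fcost rmorphB rmorphM !rmorphN !rmorph_nat; congr (- _ - _ * _).
  rewrite card_edges_in natr_sum; apply: eq_bigr => i _; rewrite natr_sum.
  by apply: eq_bigr => j /andP [lt_ij _]; rewrite expval_pstate_ZZ // neq_ltn lt_ij.
rewrite -sum1_card natr_sum [RHS]big_mkcond; apply: eq_bigr => i _.
by rewrite expval_pstate_Xat inE; case: (i \in S).
Qed.

Section EdgeFunction.
Variables (N : nat) (adj : rel 'I_N).

Lemma card_edges_in_le_edge_fun n (S : {set 'I_N}) :
  (#|S| <= n)%N -> (#|edges_in adj S| <= edge_fun adj n)%N.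
Proof. exact: (leq_bigmax_cond (P := fun T : {set 'I_N} => (#|T| <= n)%N)). Qed.

Lemma exists_n_optimal n : exists S, n_optimal adj n S.
Proof.
have [|S card_S edge_S] := @eq_bigmax_cond _ (fun T : {set 'I_N} => (#|T| <= n)%N)
  (fun T => #|edges_in adj T|).
  by apply/card_gt0P; exists set0; rewrite unfold_in /= cards0.
by exists S.
Qed.

Variables (R : rcfType) (g : R).

Lemma rhs_min_le_fcost S : rhs_min adj g <= fcost adj g S.
Proof.
have lt_S : (#|S| < N.+1)%N by rewrite ltnS -[X in (_ <= X)%N](card_ord N) max_card.
apply: (@bigmin_inf _ _ _ _ (Ordinal lt_S)) => //=.
rewrite /fcost -card_setC_ord lerB // lerN2 ler_nat.
exact: card_edges_in_le_edge_fun.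
Qed.

Lemma exists_fcost_le_rhs_min : 0 <= g -> exists S, fcost adj g S <= rhs_min adj g.
Proof.
move=> g_ge0.
have [n ->] : exists n : 'I_N.+1, rhs_min adj g = - (edge_fun adj n)%:R - g * (N - n)%:R.
  apply: (big_ind (fun x => exists n : 'I_N.+1, x = - (edge_fun adj n)%:R - g * (N - n)%:R)).
  - by exists ord0; rewrite subn0.
  - by move=> x y [n1 ->] [n2 ->]; rewrite minEle; case: ifP => _; eexists.
  - by move=> n _; exists n.
have [S [card_S edge_S]] := exists_n_optimal n.
exists S; rewrite /fcost edge_S card_setC_ord lerB // ler_wpM2l // ler_nat.
exact: leq_sub2l.
Qed.

Lemma fcost_minimizer_optimal V : 0 <= g ->
  (forall S, fcost adj g V <= fcost adj g S) -> n_optimal adj #|V| V.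
Proof.
move=> g_ge0 V_min; split => //; apply/eqP.
rewrite eqn_leq card_edges_in_le_edge_fun //=.
have [S [card_S <-]] := exists_n_optimal #|V|.
rewrite leqNgt; apply/negP => lt_VS.
have := V_min S; rewrite /fcost !card_setC_ord; apply/negP; rewrite -ltNge.
by rewrite ltr_leB ?ltrN2 ?ltr_nat // ler_wpM2l // ler_nat leq_sub2l.
Qed.
End EdgeFunction.

Unset Implicit Arguments.
Set Strict Implicit.

Theorem mainTheorem6 (R : rcfType) (N : nat) (adj : rel 'I_N) (g : R) :
  simple_graph adj -> 0 <= g ->
  ((exists phi : 'cV[R[i]]_(2 ^ N),
       stabilizer_state phi /\ expval (tfim adj g) phi = ((rhs_min adj g)%:C)%C) /\
   (forall phi : 'cV[R[i]]_(2 ^ N),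
       stabilizer_state phi -> ((rhs_min adj g)%:C)%C <= expval (tfim adj g) phi)) /\
  (forall V : {set 'I_N},
     (forall S : {set 'I_N}, fcost adj g V <= fcost adj g S) ->
     n_optimal adj #|V| V).
Proof.
(* Edges are summed over i < j. *)
move=> _ g_ge0; split; [split|].
- have [S le_S] := exists_fcost_le_rhs_min adj g_ge0.
  exists (pstate R S); split; first exact: pstate_stabilizer.
  rewrite expval_tfim_pstate; congr (_%:C)%C.
  by apply/le_anti; rewrite le_S rhs_min_le_fcost.
- move=> phi stab_phi; have [S le_S] := fcost_le_expval_tfim adj g_ge0 stab_phi.
  by apply: le_trans le_S; rewrite lecR rhs_min_le_fcost.
- by move=> V; apply: fcost_minimizer_optimal.
Qed.
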